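(* (1) The canonical projection $\pi\colon\mathrm{Aut}(\mathbb U)\to\mathrm{Aut}(\mathbb Q_{\ge0})$, $f\mapsto D_f$, is a continuous open surjective homomorphism with kernel $\mathrm{Iso}(\mathbb U)$ that admits a continuous homomorphism $s\colon\mathrm{Aut}(\mathbb Q_{\ge0})\to\mathrm{Aut}(\mathbb U)$ with $\pi\circ s=\mathrm{id}$, and hence induces an isomorphism of topological groups $\mathrm{Aut}(\mathbb U)\cong\mathrm{Iso}(\mathbb U)\rtimes\mathrm{Aut}(\mathbb Q_{\ge0})$, $(n,h)\mapsto n\,s(h)$. (2) Likewise the canonical projection $\bar\pi\colon\mathrm{Aut}_M(\overline{\mathbb U})\to\mathrm{Aut}(\mathbb Q_{\ge0})$ induces an isomorphism of topological groups $\mathrm{Aut}_M(\overline{\mathbb U})\cong\mathrm{Iso}_M(\overline{\mathbb U})\rtimes\mathrm{Aut}(\mathbb Q_{\ge0})$. In particular, the short exact sequences $1\to\mathrm{Iso}(\mathbb U)\to\mathrm{Aut}(\mathbb U)\to\mathrm{Aut}(\mathbb Q_{\ge0})\to1$ and $1\to\mathrm{Iso}_M(\overline{\mathbb U})\to\mathrm{Aut}_M(\overline{\mathbb U})\to\mathrm{Aut}(\mathbb Q_{\ge0})\to1$ split.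
   Context: $\mathbb U$ is the countable rational Urysohn ultrametric space viewed as a two-sorted ultrametric space with distance set $\mathbb Q_{\ge0}$, and $\overline{\mathbb U}$ is its Cauchy completion. A dc-automorphism is a bijection $f$ of points with an order automorphism $D_f$ of $\mathbb Q_{\ge0}$ such that $d(f(x),f(y))=D_f(d(x,y))$; isometries are those with $D_f=\mathrm{id}$. $\mathrm{Aut}(\mathbb U)$ is the group of dc-automorphisms with the topology of pointwise convergence on both sorts (basic neighbourhoods: agreement with $f$ on finitely many points and distances), $\mathrm{Iso}(\mathbb U)$ its subgroup of isometries. $\mathrm{Aut}_M(\overline{\mathbb U})$ is the dc-automorphism group of $\overline{\mathbb U}$ with basic neighbourhoods $\{g:d(g(x),f(x))<r\ \forall x\in A\}$, $A$ finite, $r>0$, and $\mathrm{Iso}_M(\overline{\mathbb U})$ its subgroup of isometries; $\mathrm{Aut}(\mathbb Q_{\ge0})$ has pointwise convergence topology. The semidirect product $N\rtimes H$ is $N\times H$ with the product topology and multiplication $(n,h)(n',h')=(n\,s(h)n's(h)^{-1},hh')$. *)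

From Stdlib Require Import ClassicalEpsilon List.
From mathcomp Require Import all_boot all_order all_algebra.
Set Implicit Arguments. Unset Strict Implicit. Unset Printing Implicit Defensive.
Import Order.TTheory GRing.Theory Num.Theory.
Local Open Scope ring_scope.

Definition qnn := {q : rat | 0 <= q}.

Definition ultrametric (X : Type) (d : X -> X -> qnn) : Prop :=
  (forall x y, val (d x y) = 0 <-> x = y) /\
  (forall x y, d x y = d y x) /\
  (forall x y z, val (d x z) <= Num.max (val (d x y)) (val (d y z))).

Definition countable_type (X : Type) : Prop := exists c : X -> nat, injective c.

Definition ext_property (X : Type) (d : X -> X -> qnn) : Prop :=
  forall (A : list X) (r : X -> rat),
    (forall a, In a A -> 0 < r a) ->
    (forall a b, In a A -> In b A ->
       val (d a b) <= Num.max (r a) (r b) /\ r a <= Num.max (val (d a b)) (r b)) ->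
    exists z, forall a, In a A -> val (d z a) = r a.

(** (X,d) is (isometric to) the countable rational Urysohn ultrametric space U:
    the unique (up to isometry) countable ultrametric space with distances in
    Q_{>=0} having the one-point extension property (Fraisse limit). *)
Definition rational_urysohn_ultrametric (X : Type) (d : X -> X -> qnn) : Prop :=
  ultrametric d /\ countable_type X /\ ext_property d.

Definition cauchy (Y : Type) (dY : Y -> Y -> qnn) (u : nat -> Y) : Prop :=
  forall eps : rat, 0 < eps -> exists N, forall m n, (N <= m)%N -> (N <= n)%N ->
    val (dY (u m) (u n)) < eps.

Definition converges_to (Y : Type) (dY : Y -> Y -> qnn) (u : nat -> Y) (y : Y) : Prop :=
  forall eps : rat, 0 < eps -> exists N, forall n, (N <= n)%N -> val (dY (u n) y) < eps.

Definition is_completion (X Y : Type) (d : X -> X -> qnn) (dY : Y -> Y -> qnn)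
    (e : X -> Y) : Prop :=
  ultrametric dY /\
  (forall x x', dY (e x) (e x') = d x x') /\
  (forall y (r : rat), 0 < r -> exists x, val (dY (e x) y) < r) /\
  (forall u : nat -> Y, cauchy dY u -> exists y, converges_to dY u y).

Definition qaut (D : qnn -> qnn) : Prop :=
  bijective D /\ forall p q : qnn, (val p <= val q) = (val (D p) <= val (D q)).

(** Elements of the (two-sorted) automorphism groups are pairs (f, D_f). *)
Definition dcmap (T : Type) := ((T -> T) * (qnn -> qnn))%type.

Definition dcaut (T : Type) (d : T -> T -> qnn) (g : dcmap T) : Prop :=
  bijective g.1 /\ qaut g.2 /\ forall x y, d (g.1 x) (g.1 y) = g.2 (d x y).

Definition dciso (T : Type) (d : T -> T -> qnn) (g : dcmap T) : Prop :=
  dcaut d g /\ g.2 = id.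

Definition finv (A : Type) (f : A -> A) : A -> A :=
  fun y => epsilon (inhabits y) (fun x => f x = y).

Definition gmul (T : Type) (g h : dcmap T) : dcmap T := (g.1 \o h.1, g.2 \o h.2).
Definition ginv (T : Type) (g : dcmap T) : dcmap T := (finv g.1, finv g.2).

Definition sd_mul (T : Type) (s : (qnn -> qnn) -> dcmap T)
    (p q : (dcmap T * (qnn -> qnn))%type) : (dcmap T * (qnn -> qnn))%type :=
  (gmul (gmul (gmul p.1 (s p.2)) q.1) (ginv (s p.2)), p.2 \o q.2).

(** Topologies given by neighbourhood bases: N x i is the i-th basic
    neighbourhood of x. *)
Definition continuous_map (T1 T2 I1 I2 : Type) (G1 : T1 -> Prop)
    (N1 : T1 -> I1 -> T1 -> Prop) (N2 : T2 -> I2 -> T2 -> Prop) (phi : T1 -> T2) :=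
  forall x, G1 x -> forall j : I2, exists i : I1,
    forall y, G1 y -> N1 x i y -> N2 (phi x) j (phi y).

Definition open_map (T1 T2 I1 I2 : Type) (G1 : T1 -> Prop)
    (N1 : T1 -> I1 -> T1 -> Prop) (G2 : T2 -> Prop) (N2 : T2 -> I2 -> T2 -> Prop)
    (phi : T1 -> T2) :=
  forall x, G1 x -> forall i : I1, exists j : I2,
    forall z, G2 z -> N2 (phi x) j z -> exists y, G1 y /\ N1 x i y /\ phi y = z.

Definition nbQ (h : qnn -> qnn) (B : list qnn) (h' : qnn -> qnn) : Prop :=
  forall q, In q B -> h' q = h q.

Definition nbPW (T : Type) (g : dcmap T) (AB : (list T * list qnn)%type) (g' : dcmap T) : Prop :=
  (forall x, In x AB.1 -> g'.1 x = g.1 x) /\ (forall q, In q AB.2 -> g'.2 q = g.2 q).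

Definition nbM (T : Type) (d : T -> T -> qnn) (g : dcmap T)
    (Ar : (list T * {r : rat | 0 < r})%type) (g' : dcmap T) : Prop :=
  forall x, In x Ar.1 -> val (d (g'.1 x) (g.1 x)) < val Ar.2.

Definition nbprod (T1 T2 I1 I2 : Type) (N1 : T1 -> I1 -> T1 -> Prop)
    (N2 : T2 -> I2 -> T2 -> Prop) (p : (T1 * T2)%type) (ij : (I1 * I2)%type)
    (q : (T1 * T2)%type) : Prop :=
  N1 p.1 ij.1 q.1 /\ N2 p.2 ij.2 q.2.

Definition canonical_split (T I : Type) (Aut Iso : dcmap T -> Prop)
    (N : dcmap T -> I -> dcmap T -> Prop) : Prop :=
  let pi := fun g : dcmap T => g.2 in
  (forall g, Aut g -> qaut (pi g)) /\
  (forall g h, Aut g -> Aut h -> pi (gmul g h) = pi g \o pi h) /\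
  continuous_map Aut N nbQ pi /\
  open_map Aut N qaut nbQ pi /\
  (forall h, qaut h -> exists g, Aut g /\ pi g = h) /\
  (forall g, Aut g -> (pi g = id <-> Iso g)) /\
  exists s : (qnn -> qnn) -> dcmap T,
    (forall h, qaut h -> Aut (s h)) /\
    (forall h k, qaut h -> qaut k -> s (h \o k) = gmul (s h) (s k)) /\
    continuous_map qaut nbQ N s /\
    (forall h, qaut h -> pi (s h) = h) /\
    let SD := fun p : (dcmap T * (qnn -> qnn))%type => Iso p.1 /\ qaut p.2 in
    let Phi := fun p : (dcmap T * (qnn -> qnn))%type => gmul p.1 (s p.2) in
    (forall p, SD p -> Aut (Phi p)) /\
    (forall g, Aut g -> exists! p, SD p /\ Phi p = g) /\
    (forall p q, SD p -> SD q -> Phi (sd_mul s p q) = gmul (Phi p) (Phi q)) /\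
    continuous_map SD (nbprod N nbQ) N Phi /\
    open_map SD (nbprod N nbQ) Aut N Phi.

(* Fix an enumeration of the Urysohn space U. Each point x gets coordinates
   coord x : Q>0 -> nat, where coord x q ranks the open q-ball of x among the
   open q-balls inside its closed q-ball, ordered by least code. Then d(x,y) is
   the largest q at which coord x and coord y differ, and the extension
   property realizes every finitely supported map as some coord x. An order
   automorphism h of Q>=0 therefore acts by coord (s(h) x) = coord x o h^-1,
   with d(s(h) x, s(h) y) = h (d(x,y)); this s is a continuous homomorphic
   section of g |-> D_g. Since s(h) transforms distances by h, it extends to
   the completion. For any such section, (n, h) |-> n s(h) is an isomorphism of
   topological groups with inverse g |-> (g s(D_g)^-1, D_g). In the metric
   topology of the completion, D_g depends continuously on g because every
   positive rational is a distance. *)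

From Pilot Require Import Defs.
From Stdlib Require Import ClassicalEpsilon Classical List Lia.
From Stdlib Require Import FunctionalExtensionality PropExtensionality.
From mathcomp Require Import all_boot all_order all_algebra zify.
Set Implicit Arguments. Unset Strict Implicit. Unset Printing Implicit Defensive.
Import Order.TTheory GRing.Theory Num.Theory.
Local Open Scope ring_scope.

Local Notation finv := Defs.finv.


Section Inverse.
Variables (A : Type) (f : A -> A).
Hypothesis bij_f : bijective f.

Lemma finvKV : cancel (finv f) f.
Proof.
case: bij_f => f' _ f'K y; apply: (epsilon_spec (inhabits y) (fun x => f x = y)).
by exists (f' y).
Qed.

Lemma finvK : cancel f (finv f).
Proof. by move=> x; apply: (bij_inj bij_f); rewrite finvKV. Qed.

Lemma finv_bij : bijective (finv f).
Proof. exact: Bijective finvKV finvK. Qed.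

End Inverse.

Lemma finv_comp A (f g : A -> A) : bijective f -> bijective g ->
  finv (f \o g) =1 finv g \o finv f.
Proof.
move=> bij_f bij_g y; have bij_fg := bij_comp bij_f bij_g.
by apply: (bij_inj bij_fg); rewrite finvKV //= !finvKV.
Qed.

Definition qnn_of (r : rat) (r_ge0 : 0 <= r) : qnn := exist _ r r_ge0.

Definition qzero : qnn := qnn_of (lexx 0).

Lemma qnn_ge0 (p : qnn) : 0 <= val p.
Proof. exact: valP. Qed.

Lemma qnn_inj (p q : qnn) : val p = val q -> p = q.
Proof. exact: val_inj. Qed.

Section OrderAutomorphism.
Variable h : qnn -> qnn.
Hypothesis qh : qaut h.

Lemma qaut_bij : bijective h.
Proof. by case: qh. Qed.

Lemma qaut_le : {mono h : p q / val p <= val q}.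
Proof. by move=> p q; case: qh => _ H; rewrite [RHS]H. Qed.

Lemma qaut_lt : {mono h : p q / val p < val q}.
Proof. by move=> p q; rewrite !ltNge qaut_le. Qed.

Lemma qaut_eq0 p : val p = 0 -> val (h p) = 0.
Proof.
move=> p0; have -> : p = qzero by apply: qnn_inj.
case: qaut_bij => h' _ h'K; apply/eqP; rewrite eq_le qnn_ge0 andbT.
by have := qnn_ge0 (h' qzero); rewrite -[0]/(val qzero) -qaut_le h'K.
Qed.

Lemma qaut_gt0 p : 0 < val p -> 0 < val (h p).
Proof.
move=> p_gt0; have := p_gt0; rewrite -[0]/(val qzero) -qaut_lt.
by rewrite (qaut_eq0 (p := qzero)).
Qed.

Lemma qaut_inv : qaut (finv h).
Proof.
split; first exact: finv_bij qaut_bij.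
by move=> p q; rewrite -[RHS]qaut_le !finvKV //; exact: qaut_bij.
Qed.

Lemma qaut_lt_finv a eps : val a < val (finv h eps) -> val (h a) < val eps.
Proof. by rewrite -{2}(finvKV qaut_bij eps) qaut_lt. Qed.

End OrderAutomorphism.

Lemma qaut_id : qaut id.
Proof. by split=> //; exists id. Qed.

Lemma qaut_comp h k : qaut h -> qaut k -> qaut (h \o k).
Proof.
move=> qh qk; split; first exact: bij_comp (qaut_bij qh) (qaut_bij qk).
by move=> p q /=; rewrite (qaut_le qh) (qaut_le qk).
Qed.

Section Ultrametric.
Variables (T : Type) (d : T -> T -> qnn).
Hypothesis ud : ultrametric d.

Lemma ud_eq0 x y : val (d x y) = 0 <-> x = y.
Proof. by case: ud. Qed.

Lemma ud_xx x : val (d x x) = 0.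
Proof. exact/ud_eq0. Qed.

Lemma ud_sym x y : d x y = d y x.
Proof. by case: ud => _ []. Qed.

Lemma ud_max x y z : val (d x z) <= Num.max (val (d x y)) (val (d y z)).
Proof. by case: ud => _ []. Qed.

Lemma ud_le x y z r : val (d x y) <= r -> val (d y z) <= r -> val (d x z) <= r.
Proof. by move=> le1 le2; apply: le_trans (ud_max x y z) _; rewrite ge_max le1. Qed.

Lemma ud_lt x y z r : val (d x y) < r -> val (d y z) < r -> val (d x z) < r.
Proof. by move=> lt1 lt2; apply: le_lt_trans (ud_max x y z) _; rewrite gt_max lt1. Qed.

Lemma ud_gt0 x y : x <> y -> 0 < val (d x y).
Proof. by move=> neq_xy; rewrite lt_def qnn_ge0 andbT; apply/eqP => /ud_eq0. Qed.

Lemma ud_isosceles x y z : val (d x y) < val (d y z) -> d x z = d y z.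
Proof.
move=> lt_xy; apply: qnn_inj; apply/eqP; rewrite eq_le.
rewrite (ud_le (ltW lt_xy)) //=; rewrite leNgt; apply/negP => lt_xz.
by have := ud_max y x z; rewrite leNgt gt_max ud_sym lt_xy lt_xz.
Qed.

Lemma ud_isosceles2 u v u' v' : val (d u' u) < val (d u v) ->
  val (d v' v) < val (d u v) -> d u' v' = d u v.
Proof.
move=> lt_u lt_v; have d_u'v : d u' v = d u v by exact: ud_isosceles.
have d_v'u' : d v' u' = d v u' by apply: ud_isosceles; rewrite (ud_sym v u') d_u'v.
by rewrite (ud_sym u' v') d_v'u' (ud_sym v u').
Qed.

End Ultrametric.

Section DcGroup.
Variables (T : Type) (d : T -> T -> qnn).
Implicit Types g k n : dcmap T.

Lemma dcaut_bij1 g : dcaut d g -> bijective g.1.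
Proof. by case. Qed.

Lemma dcaut_qaut g : dcaut d g -> qaut g.2.
Proof. by case=> _ []. Qed.

Lemma dcaut_dist g x y : dcaut d g -> d (g.1 x) (g.1 y) = g.2 (d x y).
Proof. by case=> _ []. Qed.

Lemma dcaut_mul g k : dcaut d g -> dcaut d k -> dcaut d (gmul g k).
Proof.
move=> [bg [qg dg]] [bk [qk dk]]; split; first exact: bij_comp.
by split; [exact: qaut_comp | move=> x y /=; rewrite dg dk].
Qed.

Lemma dcaut_inv g : dcaut d g -> dcaut d (ginv g).
Proof.
move=> [bg [qg dg]]; split; first exact: finv_bij.
split=> [|x y /=]; first exact: qaut_inv.
by apply: (bij_inj (qaut_bij qg)); rewrite -dg !finvKV //; exact: qaut_bij.
Qed.

Lemma gmul_eq g k : g.1 =1 k.1 -> g.2 =1 k.2 -> g = k.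
Proof.
by case: g k => [g1 g2] [k1 k2] /= E1 E2; congr pair; apply: functional_extensionality.
Qed.

Lemma gmulK n k : dcaut d k -> gmul (gmul n k) (ginv k) = n.
Proof.
move=> Ak; apply: gmul_eq => x /=; rewrite finvKV //;
  [exact: dcaut_bij1 Ak | exact: qaut_bij (dcaut_qaut Ak)].
Qed.

Lemma gmulKV n k : dcaut d k -> gmul (gmul n (ginv k)) k = n.
Proof.
move=> Ak; apply: gmul_eq => x /=; rewrite finvK //;
  [exact: dcaut_bij1 Ak | exact: qaut_bij (dcaut_qaut Ak)].
Qed.

Lemma gmulVKl n k : dcaut d k -> gmul k (gmul (ginv k) n) = n.
Proof.
move=> Ak; apply: gmul_eq => x /=; rewrite finvKV //;
  [exact: dcaut_bij1 Ak | exact: qaut_bij (dcaut_qaut Ak)].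
Qed.

End DcGroup.

Record dc_group_topology (T I : Type) (d : T -> T -> qnn)
    (N : dcmap T -> I -> dcmap T -> Prop) : Prop := DcGroupTopology {
  nbhd_mul : forall g k, dcaut d g -> dcaut d k -> forall j, exists i1 i2,
    forall g' k', dcaut d g' -> dcaut d k' -> N g i1 g' -> N k i2 k' ->
      N (gmul g k) j (gmul g' k');
  nbhd_inv : forall g, dcaut d g -> forall j, exists i, forall g', dcaut d g' ->
    N g i g' -> N (ginv g) j (ginv g');
  nbhd_pi : continuous_map (dcaut d) N nbQ (fun g => g.2);
  nbhd_refl : forall g i, dcaut d g -> N g i g;
  nbhd_meet : forall g i i', exists i'', forall g', N g i'' g' -> N g i g' /\ N g i' g'
}.

Record dc_section (T I : Type) (d : T -> T -> qnn) (N : dcmap T -> I -> dcmap T -> Prop)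
    (s : (qnn -> qnn) -> dcmap T) : Prop := DcSection {
  section_aut : forall h, qaut h -> dcaut d (s h);
  section_pi : forall h, qaut h -> (s h).2 = h;
  section_morph : forall h k, qaut h -> qaut k -> s (h \o k) = gmul (s h) (s k);
  section_cont : continuous_map qaut nbQ N s
}.

Section SectionTheory.
Variables (T I : Type) (d : T -> T -> qnn) (N : dcmap T -> I -> dcmap T -> Prop)
  (s : (qnn -> qnn) -> dcmap T).
Hypothesis sec : dc_section d N s.

Lemma section_id x : (s id).1 x = x.
Proof.
have s_id := section_aut sec qaut_id.
apply: (bij_inj (dcaut_bij1 s_id)).
by have /(f_equal (fun g => g.1 x)) := section_morph sec qaut_id qaut_id.
Qed.

Lemma section_invK h : qaut h -> cancel (s h).1 (s (finv h)).1.
Proof.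
move=> qh x; have qi := qaut_inv qh.
have /(f_equal (fun g => g.1 x)) /= <- := section_morph sec qi qh.
have -> : finv h \o h = id by apply: functional_extensionality; apply/finvK/qaut_bij.
exact: section_id.
Qed.

Lemma section_invKV h : qaut h -> cancel (s (finv h)).1 (s h).1.
Proof.
move=> qh x; have qi := qaut_inv qh.
have /(f_equal (fun g => g.1 x)) /= <- := section_morph sec qh qi.
have -> : h \o finv h = id by apply: functional_extensionality; apply/finvKV/qaut_bij.
exact: section_id.
Qed.

End SectionTheory.

Section SplitCriterion.
Variables (T I : Type) (d : T -> T -> qnn) (N : dcmap T -> I -> dcmap T -> Prop)
  (s : (qnn -> qnn) -> dcmap T).
Hypotheses (top : dc_group_topology d N) (sec : dc_section d N s).

Let s_aut := section_aut sec.
Let s_pi := section_pi sec.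
Let SD := fun p : dcmap T * (qnn -> qnn) => dciso d p.1 /\ qaut p.2.
Let Phi := fun p : dcmap T * (qnn -> qnn) => gmul p.1 (s p.2).

Lemma iso_part g : dcaut d g -> dciso d (gmul g (ginv (s g.2))).
Proof.
move=> Ag; have qg := dcaut_qaut Ag.
split; first by apply: dcaut_mul => //; apply/dcaut_inv/s_aut.
rewrite /= s_pi //; apply: functional_extensionality => q /=.
by rewrite finvKV //; exact: qaut_bij.
Qed.

(* [g = s(D_g) k], so [s(h) k] is a preimage of [h] near [g] when [h] is near [D_g]. *)
Lemma pi_open : open_map (dcaut d) N qaut nbQ (fun g => g.2).
Proof.
move=> g Ag i; have qg := dcaut_qaut Ag.
set k := gmul (ginv (s g.2)) g.
have Ak : dcaut d k by apply: dcaut_mul => //; apply/dcaut_inv/s_aut.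
have [i1 [i2 near_mul]] := nbhd_mul top (s_aut qg) Ak i.
have [B near_s] := section_cont sec qg i1.
exists B => h qh near_h; exists (gmul (s h) k).
split; first by apply: dcaut_mul => //; exact: s_aut.
split.
  rewrite -{1}(gmulVKl g (s_aut qg)); apply: near_mul => //; first exact: s_aut.
    exact: near_s.
  exact: nbhd_refl top _ _ Ak.
rewrite /= !s_pi //; apply: functional_extensionality => q /=.
by rewrite finvK //; exact: qaut_bij.
Qed.

Lemma semidirect_unique g : dcaut d g -> exists! p, SD p /\ Phi p = g.
Proof.
move=> Ag; have qg := dcaut_qaut Ag.
exists (gmul g (ginv (s g.2)), g.2); split.
  by split; [split; [exact: iso_part | exact: qg] | exact: gmulKV (s_aut qg)].
move=> [n h] [[[An n_id] qh] /= <-].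
have -> : (gmul n (s h)).2 = h by rewrite /= n_id s_pi.
by rewrite (gmulK _ (s_aut qh)).
Qed.

Lemma semidirect_morph p q : SD p -> SD q -> Phi (sd_mul s p q) = gmul (Phi p) (Phi q).
Proof.
move=> [_ qp] [_ qq]; rewrite /Phi /= (section_morph sec) //.
by apply: gmul_eq => x /=; rewrite finvK //;
  [exact: dcaut_bij1 (s_aut qp) | exact: qaut_bij (dcaut_qaut (s_aut qp))].
Qed.

Lemma semidirect_cont : continuous_map SD (nbprod N nbQ) N Phi.
Proof.
move=> [n h] [[An _] qh] j /=.
have [i1 [i2 near_mul]] := nbhd_mul top An (s_aut qh) j.
have [B near_s] := section_cont sec qh i2.
exists (i1, B) => [[n' h']] [[An' _] qh'] [/= near_n near_h].
by apply: near_mul => //; [exact: s_aut | exact: near_s].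
Qed.

(* The inverse of [Phi] is [g |-> (g s(D_g)^-1, D_g)]. *)
Lemma semidirect_open : open_map SD (nbprod N nbQ) (dcaut d) N Phi.
Proof.
move=> [n h] [[An n_id] qh] [i B] /=.
set g := gmul n (s h).
have Ag : dcaut d g by apply: dcaut_mul => //; exact: s_aut.
have g2 : g.2 = h by rewrite /= n_id s_pi.
have [j1 [j2 near_mul]] := nbhd_mul top Ag (dcaut_inv (s_aut qh)) i.
have [k2 near_inv] := nbhd_inv top (s_aut qh) j2.
have [B2 near_s] := section_cont sec qh k2.
have [j3 near_pi] := nbhd_pi top Ag (B2 ++ B).
have [j near_meet] := nbhd_meet top g j1 j3.
exists j => g' Ag' near_g'; have [near1 near3] := near_meet _ near_g'.
have near_pi_g' := near_pi _ Ag' near3; rewrite g2 in near_pi_g'.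
exists (gmul g' (ginv (s g'.2)), g'.2).
split; first by split; [exact: iso_part | exact: dcaut_qaut Ag'].
split; last by rewrite /Phi /= (gmulKV _ (s_aut (dcaut_qaut Ag'))).
split; last by move=> q Bq; apply: near_pi_g'; apply: in_or_app; right.
have -> : n = gmul g (ginv (s h)) by rewrite (gmulK _ (s_aut qh)).
have As' := s_aut (dcaut_qaut Ag').
apply: near_mul => //; first exact: dcaut_inv As'.
apply: near_inv => //.
apply: near_s; first exact: dcaut_qaut Ag'.
by move=> q Bq; apply: near_pi_g'; apply: in_or_app; left.
Qed.

Lemma canonical_split_of_section : canonical_split (dcaut d) (dciso d) N.
Proof.
split; first by move=> g /dcaut_qaut.
split; first by [].
split; first exact: nbhd_pi top.
split; first exact: pi_open.
split; first by move=> h qh; exists (s h); split; [exact: s_aut | exact: s_pi].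
split; first by move=> g Ag; split=> [g_id|[]//]; split.
exists s; split; first exact: s_aut.
split; first exact: section_morph sec.
split; first exact: section_cont sec.
split; first exact: s_pi.
split; first by move=> [n h] [[An _] qh]; apply: dcaut_mul => //; exact: s_aut.
split; first exact: semidirect_unique.
split; first exact: semidirect_morph.
split; [exact: semidirect_cont | exact: semidirect_open].
Qed.

End SplitCriterion.

Lemma pointwise_topology T (d : T -> T -> qnn) : dc_group_topology d (@nbPW T).
Proof.
split.
- move=> g k Ag Ak [A B]; exists (map k.1 A, map k.2 B), (A, B).
  move=> g' k' _ _ [near_g1 near_g2] [near_k1 near_k2]; split=> /= [x Ax|q Bq].
    by rewrite near_k1 // near_g1 //; apply: in_map.
  by rewrite near_k2 // near_g2 //; apply: in_map.
- move=> g Ag [A B]; exists (map (finv g.1) A, map (finv g.2) B).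
  have [bg1 bg2] := (dcaut_bij1 Ag, qaut_bij (dcaut_qaut Ag)).
  move=> g' Ag' [near1 near2].
  have [bg1' bg2'] := (dcaut_bij1 Ag', qaut_bij (dcaut_qaut Ag')).
  split=> /= [x Ax|q Bq].
    rewrite -{1}(finvKV bg1 x) -near1 ?finvK //.
    exact: in_map.
  rewrite -{1}(finvKV bg2 q) -near2 ?finvK //.
  exact: in_map.
- by move=> g Ag B; exists ([::], B) => g' _ [].
- by [].
- move=> g [A B] [A' B']; exists (A ++ A', B ++ B') => g' [near1 near2].
  by split; split=> /= [x Ax|q Bq]; (apply: near1 || apply: near2); apply: in_or_app; tauto.
Qed.

Definition pos_of (r : rat) (r_gt0 : 0 < r) : {r : rat | 0 < r} := exist _ r r_gt0.

Definition qnn_of_pos (r : {r : rat | 0 < r}) : qnn := qnn_of (ltW (valP r)).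

Definition pos_min (r r' : {r : rat | 0 < r}) : {r : rat | 0 < r}.
Proof.
by exists (Num.min (val r) (val r')); rewrite lt_min; apply/andP; split; exact: valP.
Defined.

Lemma pos_min_l r r' : val (pos_min r r') <= val r.
Proof. by rewrite ge_min lexx. Qed.

Lemma pos_min_r r r' : val (pos_min r r') <= val r'.
Proof. by rewrite ge_min lexx orbT. Qed.

Section MetricTopology.
Variables (T : Type) (d : T -> T -> qnn).
Hypotheses (ud : ultrametric d) (full : forall q : qnn, 0 < val q -> exists a b, d a b = q).

(* Realize [q] as [d a b]; moving [a] and [b] by less than [D_g q] cannot change
   their distance, so [D_g' q = D_g q]. *)
Lemma metric_near_pi g B : dcaut d g -> exists (A : list T) (r : {r : rat | 0 < r}),
  forall g', dcaut d g' -> nbM d g (A, r) g' -> forall q, In q B -> g'.2 q = g.2 q.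
Proof.
move=> Ag; elim: B => [|q B [A [r IH]]]; first by exists [::], (pos_of (@ltr01 rat)).
have qg := dcaut_qaut Ag.
have [q0|q_gt0] := eqVneq (val q) 0.
  exists A, r => g' Ag' near q' /= [<-|Bq']; last exact: IH.
  by apply: qnn_inj; rewrite !qaut_eq0 //; exact: dcaut_qaut Ag'.
have {}q_gt0 : 0 < val q by rewrite lt_def q_gt0 qnn_ge0.
have [a [b dab]] := full q_gt0.
exists [:: a, b & A], (pos_min r (pos_of (qaut_gt0 qg q_gt0))).
move=> g' Ag' near q' /= [<-|Bq']; last first.
  by apply: IH => // x Ax; apply: lt_le_trans (pos_min_l _ _); apply: near; right; right.
rewrite -dab -(dcaut_dist _ _ Ag) -(dcaut_dist _ _ Ag'); apply: (ud_isosceles2 ud).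
  apply: lt_le_trans; first by apply: near; left.
  by rewrite (dcaut_dist _ _ Ag) dab pos_min_r.
apply: lt_le_trans; first by apply: near; right; left.
by rewrite (dcaut_dist _ _ Ag) dab pos_min_r.
Qed.

Lemma metric_near_mul g k : dcaut d g -> dcaut d k -> forall j, exists i1 i2,
  forall g' k', dcaut d g' -> dcaut d k' -> nbM d g i1 g' -> nbM d k i2 k' ->
    nbM d (gmul g k) j (gmul g' k').
Proof.
move=> Ag Ak [A r]; have qg := dcaut_qaut Ag.
pose rq := qnn_of_pos r.
have del_gt0 : 0 < val (finv g.2 rq) := qaut_gt0 (qaut_inv qg) (p := rq) (valP r).
have [A1 [r1 near_pi]] := metric_near_pi [:: finv g.2 rq] Ag.
exists (map k.1 A ++ A1, pos_min r r1), (A, pos_of del_gt0).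
move=> g' k' Ag' Ak' near_g near_k x Ax /=.
have g'_del : g'.2 (finv g.2 rq) = rq.
  rewrite near_pi //; last by left.
    by rewrite finvKV //; exact: qaut_bij.
  by move=> y Ay; apply: lt_le_trans (pos_min_r r r1); apply: near_g; apply: in_or_app; right.
apply: (ud_lt ud (y := g'.1 (k.1 x))).
  rewrite (dcaut_dist _ _ Ag') -[val r]/(val rq) -g'_del (qaut_lt (dcaut_qaut Ag')).
  exact: near_k.
apply: lt_le_trans (pos_min_l r r1); apply: near_g; apply: in_or_app; left; exact: in_map.
Qed.

Lemma metric_near_inv g : dcaut d g -> forall j, exists i, forall g', dcaut d g' ->
  nbM d g i g' -> nbM d (ginv g) j (ginv g').
Proof.
move=> Ag [A r]; have qg := dcaut_qaut Ag.
pose rq := qnn_of_pos r.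
have [A1 [r1 near_pi]] := metric_near_pi [:: rq] Ag.
set r0 := pos_of (qaut_gt0 qg (p := rq) (valP r)).
exists (map (finv g.1) A ++ A1, pos_min r0 r1).
move=> g' Ag' near_g x Ax /=.
have g'_r : g'.2 rq = g.2 rq.
  apply: near_pi => //; last by left.
  by move=> y Ay; apply: lt_le_trans (pos_min_r _ r1); apply: near_g; apply: in_or_app; right.
have bg1 := dcaut_bij1 Ag; have bg1' := dcaut_bij1 Ag'.
set y := finv g.1 x; have gy : g.1 y = x by rewrite finvKV.
have near_y : val (d (g.1 y) (g'.1 y)) < val (g'.2 rq).
  rewrite g'_r ud_sym //; apply: (@lt_le_trans _ _ (val (pos_min r0 r1))).
    by apply: near_g; apply: in_or_app; left; apply: in_map.
  exact: pos_min_l.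
have qg' := dcaut_qaut Ag'.
rewrite -{1}gy -{2}(finvK bg1' y).
rewrite (dcaut_dist (g.1 y) _ (dcaut_inv Ag')) /= -[val r]/(val rq).
by rewrite -(finvK (qaut_bij qg') rq) (qaut_lt (qaut_inv qg')).
Qed.

Lemma metric_topology : dc_group_topology d (nbM d).
Proof.
split.
- exact: metric_near_mul.
- exact: metric_near_inv.
- move=> g Ag B; have [A [r near_pi]] := metric_near_pi B Ag.
  by exists (A, r) => g' Ag' near q Bq; exact: near_pi.
- by move=> g [A r] _ x _; rewrite ud_xx //; exact: valP.
- move=> g [A r] [A' r']; exists (A ++ A', pos_min r r') => g' near.
  split=> x Ax /=.
    by apply: lt_le_trans (pos_min_l r r'); apply: near; apply: in_or_app; left.
  by apply: lt_le_trans (pos_min_r r r'); apply: near; apply: in_or_app; right.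
Qed.

End MetricTopology.

Definition holds (P : Prop) : bool := if excluded_middle_informative P then true else false.

Lemma holdsP (P : Prop) : reflect P (holds P).
Proof. by rewrite /holds; case: excluded_middle_informative => H; constructor. Qed.

Definition minnat (P : nat -> Prop) : nat :=
  epsilon (inhabits 0%N) (fun n => P n /\ forall m, P m -> (n <= m)%N).

Lemma minnatP (P : nat -> Prop) : (exists n, P n) ->
  P (minnat P) /\ forall m, P m -> (minnat P <= m)%N.
Proof.
move=> [n Pn].
apply: (epsilon_spec (inhabits 0%N) (fun n => P n /\ forall m, P m -> (n <= m)%N)).
have exP : exists n, holds (P n) by exists n; apply/holdsP.
case: (ex_minnP exP) => m /holdsP Pm m_min.
by exists m; split=> // k /holdsP; exact: m_min.
Qed.

Definition count_below (P : nat -> Prop) (n : nat) : nat :=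
  count (fun m => holds (P m)) (iota 0 n).

Section CountBelow.
Variable P : nat -> Prop.

Lemma count_below_split a b : (a <= b)%N ->
  count_below P b = (count_below P a + count (fun m => holds (P m)) (iota a (b - a)))%N.
Proof. by move=> le_ab; rewrite /count_below -{1}(subnKC le_ab) iotaD count_cat. Qed.

Lemma count_below_gt0 n : (0 < count_below P n)%N <-> exists m, (m < n)%N /\ P m.
Proof.
rewrite -has_count; split=> [/hasP [m]|[m [lt_mn Pm]]].
  by rewrite mem_iota => /andP [_ lt_mn] /holdsP Pm; exists m.
by apply/hasP; exists m; [rewrite mem_iota | apply/holdsP].
Qed.

Lemma count_below_const a b : (a <= b)%N ->
  (forall m, (a <= m < b)%N -> ~ P m) -> count_below P b = count_below P a.
Proof.
move=> le_ab noP; rewrite (count_below_split le_ab); apply/eqP.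
rewrite -[X in _ == X]addn0 eqn_add2l -leqn0 leqNgt -has_count.
by apply/hasP => [[m]]; rewrite mem_iota subnKC // => /noP nPm /holdsP.
Qed.

Lemma count_below_lt a b : P a -> (a < b)%N -> (count_below P a < count_below P b)%N.
Proof.
move=> Pa lt_ab; rewrite (count_below_split (ltnW lt_ab)) -addn1 leq_add2l -has_count.
by apply/hasP; exists a; [rewrite mem_iota leqnn subnKC // ltnW | apply/holdsP].
Qed.

Lemma count_below_S n : P n -> count_below P n.+1 = (count_below P n).+1.
Proof.
move=> Pn; rewrite (count_below_split (leqnSn n)) subSnn /=.
by case: holdsP => // _; rewrite addn1.
Qed.

Lemma count_below_onto : (forall n, exists m, (n <= m)%N /\ P m) ->
  forall k, exists m, P m /\ count_below P m = k.
Proof.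
move=> unbounded; elim=> [|k [m [Pm count_m]]].
  have [n [_ Pn]] := unbounded 0%N.
  have [P_min min_le] := minnatP (ex_intro _ n Pn).
  exists (minnat P); split=> //; apply/eqP; rewrite -leqn0 leqNgt.
  by apply/negP => /count_below_gt0 [j [lt_j /min_le]]; rewrite leqNgt lt_j.
have [n [lt_mn Pn]] := unbounded m.+1.
have ex_next : exists j, P j /\ (m < j)%N by exists n.
have [[Pn' lt_mn'] min_le] := minnatP ex_next.
exists (minnat (fun n => P n /\ (m < n)%N)); split=> //.
rewrite (@count_below_const m.+1) // ?count_below_S ?count_m //.
by move=> j /andP [lt_mj lt_j] Pj; have := min_le j (conj Pj lt_mj); rewrite leqNgt lt_j.
Qed.

End CountBelow.

Lemma filter_length_lt A (f : A -> bool) (L : list A) a : In a L -> f a = false ->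
  (length (List.filter f L) < length L)%N.
Proof.
elim: L => [|b L IH] //= [<-|La] fa.
  by rewrite fa; have := List.filter_length_le f L; lia.
by case: (f b) => /=; have := IH La fa; lia.
Qed.

Lemma list_max (L : list qnn) (P : qnn -> Prop) : (exists q, In q L /\ P q) ->
  exists q1, In q1 L /\ P q1 /\ forall q, In q L -> P q -> val q <= val q1.
Proof.
elim: L => [|a L IH] [q [Lq Pq]] //.
case: (classic (exists q, In q L /\ P q)) => [exL|nexL].
  have [q1 [Lq1 [Pq1 q1_max]]] := IH exL.
  case: (classic (P a /\ val q1 <= val a)) => [[Pa le_q1a]|na].
    exists a; split; first by left.
    by split=> // q' /= [<-|Lq'] Pq' //; exact: le_trans (q1_max _ Lq' Pq') le_q1a.
  exists q1; split; first by right.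
  split=> // q' /= [<-|Lq'] Pq'; last exact: q1_max.
  by case: leP => // lt_q1a; exfalso; apply: na; split=> //; exact: ltW.
case: Lq Pq => [<-|Lq Pq]; last by exfalso; apply: nexL; exists q.
move=> Pa; exists a; split; first by left.
by split=> // q' /= [<-|Lq'] Pq' //; exfalso; apply: nexL; exists q'.
Qed.

Lemma list_strict_ub (L : list qnn) :
  exists p : qnn, 0 < val p /\ forall q, In q L -> val q < val p.
Proof.
elim: L => [|a L [p [p_gt0 p_ub]]]; first by exists (qnn_of (@ler01 rat)).
have ap_ge0 : 0 <= val a + val p by rewrite addr_ge0 // ?qnn_ge0 // ltW.
exists (qnn_of ap_ge0); split=> /=; first exact: ltr_wpDl (qnn_ge0 a) p_gt0.
move=> q [<-|Lq]; first by rewrite ltrDl.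
by apply: lt_le_trans (p_ub _ Lq) _; rewrite lerDr qnn_ge0.
Qed.

(* Coordinates exhibit [X] as a space of finitely supported maps [Q>0 -> nat],
   with [d x y] the largest radius at which the coordinates of [x] and [y]
   differ. *)
Record coordinates (X : Type) (d : X -> X -> qnn) (coord : X -> qnn -> nat)
    (supp : X -> list qnn) : Prop := Coordinates {
  coord_eq : forall x y q, val (d x y) < val q -> coord x q = coord y q;
  coord_neq : forall x y, x <> y -> coord x (d x y) <> coord y (d x y);
  coord0 : forall x q, val q = 0 -> coord x q = 0%N;
  coord_supp : forall x q, coord x q <> 0%N -> In q (supp x);
  coord_onto : forall f : qnn -> nat, (forall q, val q = 0 -> f q = 0%N) ->
    (exists L, forall q, f q <> 0%N -> In q L) -> exists x, forall q, coord x q = f q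
}.

Section CoordinateAction.
Variables (X : Type) (d : X -> X -> qnn) (coord : X -> qnn -> nat) (supp : X -> list qnn).
Hypotheses (ud : ultrametric d) (C : coordinates d coord supp).

Lemma coord_inj x y : (forall q, coord x q = coord y q) -> x = y.
Proof. by move=> E; apply: NNPP => /(coord_neq C); apply. Qed.

Definition coord_act (h : qnn -> qnn) : dcmap X :=
  (fun x => epsilon (inhabits x) (fun x' => forall q, coord x' q = coord x (finv h q)), h).

Lemma coord_actE h x : qaut h -> forall q, coord ((coord_act h).1 x) q = coord x (finv h q).
Proof.
move=> qh.
apply: (epsilon_spec (inhabits x) (fun x' => forall q, coord x' q = coord x (finv h q))).
apply: (coord_onto C) => [q q0|].
  by apply: (coord0 C); apply: qaut_eq0 q0; exact: qaut_inv.
exists (map h (supp x)) => q /(coord_supp C) supp_q.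
by have := in_map h _ _ supp_q; rewrite finvKV //; exact: qaut_bij.
Qed.

Lemma coord_act_dist h x y : qaut h ->
  d ((coord_act h).1 x) ((coord_act h).1 y) = h (d x y).
Proof.
move=> qh; have qi := qaut_inv qh.
have [<-|neq_xy] := classic (x = y).
  by apply: qnn_inj; rewrite ud_xx // qaut_eq0 // ud_xx.
set x' := (coord_act h).1 x; set y' := (coord_act h).1 y.
have h_dxy : finv h (h (d x y)) = d x y by rewrite finvK //; exact: qaut_bij.
have neq_x'y' : x' <> y'.
  move=> E; apply: (coord_neq C neq_xy).
  by rewrite -{1}h_dxy -coord_actE // -/x' E /y' coord_actE // h_dxy.
apply: qnn_inj; apply/eqP; rewrite eq_le; apply/andP; split; rewrite leNgt; apply/negP => lt_d.
  apply: (coord_neq C neq_x'y'); rewrite !coord_actE //; apply: (coord_eq C).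
  by rewrite -h_dxy (qaut_lt qi).
have := coord_actE x qh (h (d x y)); rewrite -/x' (coord_eq C lt_d) /y' coord_actE // h_dxy.
by move/esym; exact: (coord_neq C neq_xy).
Qed.

Lemma coord_act_invK h : qaut h -> cancel (coord_act h).1 (coord_act (finv h)).1.
Proof.
move=> qh x; have qi := qaut_inv qh; apply: coord_inj => q; rewrite !coord_actE //.
by rewrite finvKV //; apply/finv_bij/qaut_bij.
Qed.

Lemma coord_act_invKV h : qaut h -> cancel (coord_act (finv h)).1 (coord_act h).1.
Proof.
move=> qh x; have qi := qaut_inv qh; apply: coord_inj => q; rewrite !coord_actE //.
by rewrite finvK //; apply/finv_bij/qaut_bij.
Qed.

Lemma coord_act_cont : continuous_map qaut nbQ (@nbPW X) coord_act.
Proof.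
move=> h qh [A B]; exists (B ++ flat_map supp A) => h' qh' near_h.
split=> /= [x Ax|q Bq]; last by apply: near_h; apply: in_or_app; left.
have near_supp u : In u (supp x) -> h' u = h u.
  by move=> supp_u; apply: near_h; apply: in_or_app; right; apply/in_flat_map; exists x.
have [bh bh'] := (qaut_bij qh, qaut_bij qh').
apply: coord_inj => q; rewrite !coord_actE //.
case: (coord x (finv h q) =P 0%N) => [z|nz].
  case: (coord x (finv h' q) =P 0%N) => [z'|nz']; first by rewrite z z'.
  have h_q : h (finv h' q) = q by rewrite -near_supp ?finvKV //; exact: (coord_supp C).
  by rewrite -{2}h_q finvK.
have h'_q : h' (finv h q) = q by rewrite near_supp ?finvKV //; exact: (coord_supp C).
by rewrite -{1}h'_q finvK.
Qed.

Lemma coord_section : dc_section d (@nbPW X) coord_act.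
Proof.
split=> [h qh|//|h k qh qk|]; last exact: coord_act_cont.
  split; last by split=> // x y; exact: coord_act_dist.
  exact: Bijective (coord_act_invK qh) (coord_act_invKV qh).
congr pair; apply: functional_extensionality => x /=.
have qhk := qaut_comp qh qk; apply: coord_inj => q; rewrite !coord_actE //.
by rewrite finv_comp //; exact: qaut_bij.
Qed.

End CoordinateAction.

Section UrysohnCoordinates.
Variables (X : Type) (d : X -> X -> qnn) (c : X -> nat).
Hypotheses (ud : ultrametric d) (c_inj : injective c) (ext : ext_property d)
  (inhX : inhabited X).

Definition ball_code (y : X) (q : qnn) : nat :=
  minnat (fun n => exists z, val (d y z) < val q /\ c z = n).

Definition ball_codes (y : X) (q : qnn) : nat -> Prop :=
  fun n => exists z, val (d y z) <= val q /\ ball_code z q = n.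

Definition ball_index (y : X) (q : qnn) : nat := count_below (ball_codes y q) (ball_code y q).

(* The open [q]-balls inside the closed [q]-ball around [y] are enumerated by
   increasing least code; [coord y q] is the rank of the one containing [y]. *)
Definition coord (y : X) (q : qnn) : nat := if 0 < val q then ball_index y q else 0%N.

Definition code_point (n : nat) : X := epsilon inhX (fun z => c z = n).

Definition coord_support (x : X) : list qnn :=
  map (fun n => d x (code_point n)) (List.seq 0 (c x)).

Lemma code_pointK : cancel c code_point.
Proof.
move=> z; apply: c_inj; apply: (epsilon_spec inhX (fun w => c w = c z)).
by exists z.
Qed.

Lemma ball_codeP y q : 0 < val q ->
  (exists z, val (d y z) < val q /\ c z = ball_code y q) /\
  forall z, val (d y z) < val q -> (ball_code y q <= c z)%N.
Proof.
move=> q_gt0; have y_in : val (d y y) < val q by rewrite ud_xx.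
have ex_code : exists n, exists z, val (d y z) < val q /\ c z = n by exists (c y), y.
have [code_in code_min] := minnatP ex_code.
by split=> // z dz; apply: code_min; exists z.
Qed.

Lemma ball_code_eq y z q : val (d y z) < val q -> ball_code y q = ball_code z q.
Proof.
move=> dyz; rewrite /ball_code; congr minnat.
apply: functional_extensionality => n; apply: propositional_extensionality.
split=> [[w [dw cw]]|[w [dw cw]]]; exists w; split=> //.
  by apply: (ud_lt ud _ dw); rewrite (ud_sym ud).
exact: (ud_lt ud dyz dw).
Qed.

Lemma ball_codes_eq y z q : val (d y z) <= val q -> ball_codes y q = ball_codes z q.
Proof.
move=> dyz; apply: functional_extensionality => n; apply: propositional_extensionality.
split=> [[w [dw cw]]|[w [dw cw]]]; exists w; split=> //.
  by apply: (ud_le ud _ dw); rewrite (ud_sym ud).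
exact: (ud_le ud dyz dw).
Qed.

Lemma ball_code_mem y q : ball_codes y q (ball_code y q).
Proof. by rewrite /ball_codes; exists y; rewrite ud_xx ?qnn_ge0. Qed.

Lemma ball_code_neq y z : y <> z -> ball_code y (d y z) <> ball_code z (d y z).
Proof.
move=> neq_yz E; have q_gt0 := ud_gt0 ud neq_yz.
have [[w [dw cw]] _] := ball_codeP y q_gt0.
have [[w' [dw' cw']] _] := ball_codeP z q_gt0.
have eq_ww' : w = w' by apply: c_inj; rewrite cw cw' E.
subst w'; have : val (d y z) < val (d y z) by apply: (ud_lt ud dw); rewrite (ud_sym ud w).
by rewrite ltxx.
Qed.

Lemma coord_eq_lt x y q : val (d x y) < val q -> coord x q = coord y q.
Proof.
move=> dxy; rewrite /coord (le_lt_trans (qnn_ge0 _) dxy).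
by rewrite /ball_index (ball_code_eq dxy) (ball_codes_eq (ltW dxy)).
Qed.

Lemma coord_neq_dist x y : x <> y -> coord x (d x y) <> coord y (d x y).
Proof.
move=> neq_xy; rewrite /coord (ud_gt0 ud neq_xy) /ball_index.
rewrite -(ball_codes_eq (lexx (val (d x y)))).
have x_in := ball_code_mem x (d x y).
have y_in : ball_codes x (d x y) (ball_code y (d x y)).
  by rewrite (ball_codes_eq (lexx (val (d x y)))); exact: ball_code_mem.
case: (ltngtP (ball_code x (d x y)) (ball_code y (d x y))) => [lt_xy|lt_yx|].
- by have := count_below_lt x_in lt_xy; lia.
- by have := count_below_lt y_in lt_yx; lia.
- by move/(ball_code_neq neq_xy).
Qed.

Lemma coord_nonpos x q : ~~ (0 < val q) -> coord x q = 0%N.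
Proof. by rewrite /coord => /negbTE ->. Qed.

(* A nonzero rank at [q] comes from a point of smaller code than [x] at
   distance exactly [q] from [x]. *)
Lemma coord_suppP x q : coord x q <> 0%N -> In q (coord_support x).
Proof.
rewrite /coord; case: ifP => // q_gt0 /eqP; rewrite -lt0n.
move=> /count_below_gt0 [m [lt_m [w [dw cw]]]].
have [[z [dz cz]] _] := ball_codeP w q_gt0.
have [_ x_min] := ball_codeP x q_gt0.
have dxz : val (d x z) = val q.
  apply/eqP; rewrite eq_le (ud_le ud dw (ltW dz)) /= leNgt; apply/negP => lt_xz.
  by have := x_min z lt_xz; rewrite cz cw; lia.
have x_in : val (d x x) < val q by rewrite (ud_xx ud).
have lt_cz : (c z < c x)%N by have := x_min x x_in; rewrite cz cw; lia.
have -> : q = d x (code_point (c z)) by apply: qnn_inj; rewrite code_pointK dxz.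
by apply: (in_map (fun n => d x (code_point n))); apply/in_seq; lia.
Qed.

Lemma ball_index_min y q : 0 < val q ->
  (forall u, val (d y u) <= val q -> (c y <= c u)%N) -> ball_index y q = 0%N.
Proof.
move=> q_gt0 y_min; have [[w [dw cw]] code_min] := ball_codeP y q_gt0.
have code_y : ball_code y q = c y.
  by apply/eqP; rewrite eqn_leq code_min ?ud_xx //= -cw y_min // ltW.
rewrite /ball_index code_y; apply/eqP; rewrite -leqn0 leqNgt.
apply/negP => /count_below_gt0 [m [lt_m [u [du cu]]]].
have [[z [dz cz]] _] := ball_codeP u q_gt0.
by have := y_min z (ud_le ud du (ltW dz)); rewrite cz cu; lia.
Qed.

Lemma coord_min y (p : qnn) : (forall z, val (d y z) < val p -> (c y <= c z)%N) ->
  forall q, val q < val p -> coord y q = 0%N.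
Proof.
move=> y_min q lt_qp; have [q_gt0|q_le0] := boolP (0 < val q); last exact: coord_nonpos.
rewrite /coord q_gt0 ball_index_min // => u du; apply: y_min; exact: le_lt_trans lt_qp.
Qed.

(* The extension property yields points at distance exactly [q] from all of
   [y] and any finitely many points of the closed ball, so this ball contains
   open [q]-balls of arbitrarily large least code. *)
Lemma ball_codes_unbounded y q : 0 < val q ->
  forall N, exists m, (N <= m)%N /\ ball_codes y q m.
Proof.
move=> q_gt0 N.
set A := y :: List.filter (fun z => val (d y z) <= val q) (map code_point (List.seq 0 N)).
have A_in a : In a A -> val (d y a) <= val q.
  by move=> /= [<-|/filter_In [_ ->]] //; rewrite (ud_xx ud) ltW.
have [w dw] : exists z, forall a, In a A -> val (d z a) = val q.
  apply: (ext (r := fun _ => val q)) => // a b Aa Ab; split; last by rewrite le_max lexx orbT.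
  by rewrite le_max (ud_le ud _ (A_in b Ab)) // (ud_sym ud); exact: A_in.
have dwy : val (d w y) = val q by apply: dw; left.
exists (ball_code w q); split; last by exists w; rewrite (ud_sym ud) dwy.
rewrite leqNgt; apply/negP => lt_code.
have [[z [dz cz]] _] := ball_codeP w q_gt0.
have A_z : In z A.
  right; apply/filter_In; split.
    by rewrite -(code_pointK z); apply: in_map; apply/in_seq; rewrite cz; lia.
  by apply: (ud_le ud _ (ltW dz)); rewrite (ud_sym ud) dwy.
by move: dz; rewrite dw // ltxx.
Qed.

Lemma exists_subball y q k : 0 < val q -> exists z, val (d y z) <= val q /\
  ball_index z q = k /\ forall u, val (d z u) < val q -> (c z <= c u)%N.
Proof.
move=> q_gt0.
have [m [[w [dw cw]] count_m]] := count_below_onto (ball_codes_unbounded y q_gt0) k.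
have [[z [dz cz]] _] := ball_codeP w q_gt0.
have code_z : ball_code z q = c z by rewrite -(ball_code_eq dz) cw cz.
have dyz : val (d y z) <= val q := ud_le ud dw (ltW dz).
exists z; split=> //; split.
  by rewrite /ball_index code_z -(ball_codes_eq dyz) cz cw count_m.
by move=> u du; rewrite -code_z; have [_ ->] := ball_codeP z q_gt0.
Qed.

Lemma coord_eq_min y (p : qnn) (f : qnn -> nat) :
  (forall z, val (d y z) < val p -> (c y <= c z)%N) ->
  (forall q, val p <= val q -> coord y q = f q) ->
  (forall q, val q < val p -> f q = 0%N) -> forall q, coord y q = f q.
Proof.
move=> y_min f_above f_below q; case: (leP (val p) (val q)) => [|lt_qp]; first exact: f_above.
by rewrite f_below // (coord_min y_min).
Qed.

(* Induction on the number of radii below [p] where [f] is still to be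
   realized: refine [y] at the largest of them. *)
Lemma coord_onto_aux n : forall (L : list qnn) (p : qnn) y (f : qnn -> nat),
  length L = n -> 0 < val p -> (forall z, val (d y z) < val p -> (c y <= c z)%N) ->
  (forall q, val p <= val q -> coord y q = f q) ->
  (forall q, val q < val p -> f q <> 0%N -> In q L) ->
  (forall q, ~~ (0 < val q) -> f q = 0%N) -> exists x, forall q, coord x q = f q.
Proof.
elim/ltn_ind: n => n IH L p y f len_L p_gt0 y_min f_above f_supp f0.
pose pending q := In q L /\ 0 < val q /\ val q < val p /\ f q <> 0%N.
case: (classic (exists q, pending q)) => [ex_pending|no_pending]; last first.
  exists y; apply: (coord_eq_min y_min f_above) => q lt_qp; apply: NNPP => fq.
  have [q_gt0|q_le0] := boolP (0 < val q); last exact: fq (f0 _ q_le0).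
  by apply: no_pending; exists q; split; [exact: f_supp | split].
have [q1 [L_q1 [[q1_gt0 [lt_q1p fq1]] q1_max]]] := list_max ex_pending.
have [z [dyz [index_z z_min]]] := exists_subball y (f q1) q1_gt0.
set L' := List.filter (fun q => val q < val q1) L.
have lt_len : (length L' < n)%N.
  by rewrite -len_L; apply: (filter_length_lt L_q1); rewrite ltxx.
apply: (IH _ lt_len L' q1 z f erefl q1_gt0 z_min) => //.
- move=> q le_q1q; have [eq_q|neq_q] := eqVneq (val q) (val q1).
    by rewrite (qnn_inj eq_q) /coord q1_gt0 index_z.
  have lt_q1q : val q1 < val q by rewrite lt_def neq_q le_q1q.
  have dzy : val (d z y) < val q by apply: le_lt_trans lt_q1q; rewrite (ud_sym ud).
  rewrite (coord_eq_lt dzy); case: (leP (val p) (val q)) => [|lt_qp]; first exact: f_above.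
  rewrite (coord_min y_min lt_qp); apply: esym; apply: NNPP => fq.
  have q_gt0 : 0 < val q := lt_trans q1_gt0 lt_q1q.
  by have := q1_max q (f_supp q lt_qp fq) (conj q_gt0 (conj lt_qp fq)); rewrite leNgt lt_q1q.
- move=> q lt_qq1 fq; apply/filter_In; split=> //.
  by apply: f_supp => //; exact: lt_trans lt_qq1 lt_q1p.
Qed.

Definition least_code_point : X := code_point (minnat (fun n => exists z, c z = n)).

Lemma least_code_pointP z : (c least_code_point <= c z)%N.
Proof.
have [x0] := inhX.
have ex_code : exists n, exists z, c z = n by exists (c x0), x0.
have [[w cw] code_min] := minnatP ex_code.
by rewrite /least_code_point -cw code_pointK cw; apply: code_min; exists z.
Qed.

Lemma coord_least_code_point q : coord least_code_point q = 0%N.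
Proof.
have [q_gt0|q_le0] := boolP (0 < val q); last exact: coord_nonpos.
by rewrite /coord q_gt0 ball_index_min // => u _; exact: least_code_pointP.
Qed.

Lemma coord_surj (f : qnn -> nat) : (forall q, val q = 0 -> f q = 0%N) ->
  (exists L, forall q, f q <> 0%N -> In q L) -> exists x, forall q, coord x q = f q.
Proof.
move=> f0 [L f_supp]; have [p [p_gt0 p_ub]] := list_strict_ub L.
have f_le0 q : ~~ (0 < val q) -> f q = 0%N.
  by move=> q_le0; apply: f0; apply/eqP; rewrite eq_le qnn_ge0 andbT leNgt.
apply: (coord_onto_aux erefl p_gt0 (fun z _ => least_code_pointP z) _
  (fun q _ => f_supp q) f_le0).
move=> q le_pq; rewrite coord_least_code_point.
by apply: esym; apply: NNPP => /f_supp /p_ub; rewrite ltNge le_pq.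
Qed.

Lemma urysohn_coordinates : coordinates d coord coord_support.
Proof.
split.
- exact: coord_eq_lt.
- exact: coord_neq_dist.
- by move=> x q q0; apply: coord_nonpos; rewrite q0 ltxx.
- exact: coord_suppP.
- exact: coord_surj.
Qed.

End UrysohnCoordinates.

Lemma inv_succ_lt (eps : rat) : 0 < eps ->
  exists N, forall n, (N <= n)%N -> (n.+1%:R)^-1 < eps.
Proof.
move=> eps_gt0; exists (Num.Def.archi_bound eps^-1) => n le_Nn.
have inv_gt0 : 0 < eps^-1 by rewrite invr_gt0.
have bound := archi_boundP (ltW inv_gt0).
rewrite -[eps]invrK ltf_pV2 ?posrE ?invr_gt0 ?ltr0Sn //.
by apply: lt_le_trans bound _; rewrite ler_nat; exact: leq_trans le_Nn (leqnSn n).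
Qed.

Section UltrametricLimits.
Variables (Y : Type) (dY : Y -> Y -> qnn).
Hypothesis udY : ultrametric dY.

Lemma converges_cauchy u y : converges_to dY u y -> cauchy dY u.
Proof.
move=> uy eps eps_gt0; have [N near] := uy eps eps_gt0.
exists N => m n le_m le_n; apply: (ud_lt udY (near m le_m)).
by rewrite (ud_sym udY); exact: near.
Qed.

Lemma cauchy_qaut_image h (u v : nat -> Y) : qaut h ->
  (forall m n, dY (u m) (u n) = h (dY (v m) (v n))) -> cauchy dY v -> cauchy dY u.
Proof.
move=> qh uv v_cauchy eps eps_gt0.
pose epsq := qnn_of (ltW eps_gt0).
have [N near] := v_cauchy _ (qaut_gt0 (qaut_inv qh) (p := epsq) eps_gt0).
by exists N => m n le_m le_n; rewrite uv; apply: (qaut_lt_finv qh (eps := epsq)); exact: near.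
Qed.

(* Distances to a point other than the limit are eventually constant in an
   ultrametric space. *)
Lemma converges_qaut_dist h u v z y w w' : qaut h ->
  converges_to dY u z -> converges_to dY v y ->
  (forall n, dY (u n) w = h (dY (v n) w')) -> dY z w = h (dY y w').
Proof.
move=> qh uz vy uv; have [eq_yw'|neq_yw'] := classic (y = w').
  subst w'; apply: qnn_inj; rewrite qaut_eq0 ?(ud_xx udY) //.
  apply/eqP; rewrite eq_le qnn_ge0 andbT leNgt; apply/negP => dzw_gt0.
  have [N1 near_u] := uz _ dzw_gt0.
  have [N2 near_v] := vy _ (qaut_gt0 (qaut_inv qh) dzw_gt0).
  have [le1 le2] := (leq_maxl N1 N2, leq_maxr N1 N2).
  suff : val (dY z w) < val (dY z w) by rewrite ltxx.
  apply: (ud_lt udY (y := u (maxn N1 N2))); first by rewrite (ud_sym udY); exact: near_u.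
  by rewrite uv; apply: (qaut_lt_finv qh); exact: near_v.
have r_gt0 := ud_gt0 udY neq_yw'.
have [N1 near_v] := vy _ r_gt0.
have [N2 near_u] := uz _ (qaut_gt0 qh r_gt0).
have [le1 le2] := (leq_maxl N1 N2, leq_maxr N1 N2).
set n := maxn N1 N2.
have dv : dY (v n) w' = dY y w' := ud_isosceles udY (near_v n le1).
rewrite -dv -uv; apply: (ud_isosceles udY).
by rewrite uv dv (ud_sym udY); exact: near_u.
Qed.

End UltrametricLimits.

Section Completion.
Variables (X : Type) (d : X -> X -> qnn) (Y : Type) (dY : Y -> Y -> qnn) (e : X -> Y)
  (s : (qnn -> qnn) -> dcmap X).
Hypotheses (udY : ultrametric dY) (e_iso : forall x x', dY (e x) (e x') = d x x')
  (e_dense : forall y (r : rat), 0 < r -> exists x, val (dY (e x) y) < r)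
  (complete : forall u : nat -> Y, cauchy dY u -> exists y, converges_to dY u y)
  (secX : dc_section d (@nbPW X) s).

Lemma completion_full_dist : (forall q : qnn, 0 < val q -> exists a b, d a b = q) ->
  forall q : qnn, 0 < val q -> exists a b, dY a b = q.
Proof. by move=> full q /full [a [b dab]]; exists (e a), (e b); rewrite e_iso. Qed.

Lemma dense_seq y : exists xs : nat -> X, converges_to dY (fun n => e (xs n)) y.
Proof.
have [x1 _] := e_dense y ltr01.
pose P n x := val (dY (e x) y) < (n.+1%:R)^-1.
exists (fun n => epsilon (inhabits x1) (P n)) => eps eps_gt0.
have [N small] := inv_succ_lt eps_gt0.
exists N => n le_Nn; apply: lt_trans (small n le_Nn).
by apply: (epsilon_spec (inhabits x1) (P n)); apply: e_dense; rewrite invr_gt0 ltr0Sn.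
Qed.

Lemma completion_dist_inj z z' : (forall x, dY z (e x) = dY z' (e x)) -> z = z'.
Proof.
move=> E; apply: NNPP => neq_zz'.
have [x dx] := e_dense z' (ud_gt0 udY neq_zz').
have dzx : val (dY z (e x)) < val (dY z z') by rewrite E (ud_sym udY).
by have := ud_lt udY dzx dx; rewrite ltxx.
Qed.

Lemma section_dist h x x' : qaut h -> d ((s h).1 x) ((s h).1 x') = h (d x x').
Proof.
by move=> qh; rewrite (dcaut_dist _ _ (section_aut secX qh)) (section_pi secX qh).
Qed.

Lemma ext_point h y : qaut h -> exists z, forall x, dY z (e ((s h).1 x)) = h (dY y (e x)).
Proof.
move=> qh; have [xs xs_y] := dense_seq y.
have u_cauchy : cauchy dY (fun n => e ((s h).1 (xs n))).
  apply: (cauchy_qaut_image qh) (converges_cauchy udY xs_y) => m n.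
  by rewrite !e_iso section_dist.
have [z u_z] := complete u_cauchy.
exists z => x; apply: (converges_qaut_dist udY qh u_z xs_y) => n.
by rewrite !e_iso section_dist.
Qed.

Definition ext_act (h : qnn -> qnn) : dcmap Y :=
  (fun y => epsilon (inhabits y)
     (fun z => forall x, dY z (e ((s h).1 x)) = h (dY y (e x))), h).

Lemma ext_actE h y : qaut h -> forall x, dY ((ext_act h).1 y) (e ((s h).1 x)) = h (dY y (e x)).
Proof.
move=> qh; apply: (epsilon_spec (inhabits y)
  (fun z => forall x, dY z (e ((s h).1 x)) = h (dY y (e x)))).
exact: ext_point.
Qed.

Lemma ext_act_dist h y y' : qaut h ->
  dY ((ext_act h).1 y) ((ext_act h).1 y') = h (dY y y').
Proof.
move=> qh; have [<-|neq_yy'] := classic (y = y').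
  by apply: qnn_inj; rewrite (ud_xx udY) qaut_eq0 // (ud_xx udY).
have [x dx] := e_dense y' (ud_gt0 udY neq_yy').
have dxy : dY (e x) y = dY y' y by apply: (ud_isosceles udY); rewrite (ud_sym udY y').
set a := (ext_act h).1 y; set b := (ext_act h).1 y'; set w := e ((s h).1 x).
have da : dY a w = h (dY y y') by rewrite ext_actE // (ud_sym udY) dxy (ud_sym udY).
have db : val (dY b w) < val (dY w a).
  by rewrite ext_actE // (ud_sym udY w) da (qaut_lt qh) (ud_sym udY y').
by rewrite (ud_sym udY a) (ud_isosceles udY db) (ud_sym udY w).
Qed.

Lemma ext_act_invK h : qaut h -> cancel (ext_act h).1 (ext_act (finv h)).1.
Proof.
move=> qh y; have qi := qaut_inv qh; apply: completion_dist_inj => x.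
rewrite -{1}(section_invK secX qh x) ext_actE // ext_actE // finvK //.
exact: qaut_bij.
Qed.

Lemma ext_act_invKV h : qaut h -> cancel (ext_act (finv h)).1 (ext_act h).1.
Proof.
move=> qh y; have qi := qaut_inv qh; apply: completion_dist_inj => x.
rewrite -{1}(section_invKV secX qh x) ext_actE // ext_actE // finvKV //.
exact: qaut_bij.
Qed.

Lemma ext_act_morph h k : qaut h -> qaut k -> ext_act (h \o k) = gmul (ext_act h) (ext_act k).
Proof.
move=> qh qk; have qhk := qaut_comp qh qk.
apply: gmul_eq => // y; apply: completion_dist_inj => x.
rewrite -(section_invKV secX qhk x) ext_actE // (section_morph secX qh qk) /=.
by rewrite ext_actE // ext_actE.
Qed.

Lemma ext_act_cont : continuous_map qaut nbQ (nbM dY) ext_act.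
Proof.
move=> h qh [A r]; set rq := qnn_of_pos r; set del := finv h rq.
have h_del : h del = rq by rewrite finvKV //; exact: qaut_bij.
have del_gt0 : 0 < val del := qaut_gt0 (qaut_inv qh) (p := rq) (valP r).
suff [B near] : exists B, forall h', qaut h' -> nbQ h B h' ->
    forall y, In y A -> val (dY ((ext_act h').1 y) ((ext_act h).1 y)) < val r.
  by exists B.
elim: A => [|y A [B near]]; first by exists [::].
have [x dx] := e_dense y del_gt0.
have [B0 near_s] := section_cont secX qh ([:: x], [::]).
exists (del :: B0 ++ B) => h' qh' near_h y' /= [<-|Ay']; last first.
  by apply: near => // q Bq; apply: near_h; right; apply: in_or_app; right.
have h'_del : h' del = h del by apply: near_h; left.
have [sx _] : nbPW (s h) ([:: x], [::]) (s h').
  by apply: near_s => // q Bq; apply: near_h; right; apply: in_or_app; left.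
have dyx : val (dY y (e x)) < val del by rewrite (ud_sym udY).
apply: (ud_lt udY (y := e ((s h).1 x))).
  rewrite -(sx x) /=; last by left.
  by rewrite ext_actE // -[val r]/(val rq) -h_del -h'_del (qaut_lt qh').
by rewrite (ud_sym udY) ext_actE // -[val r]/(val rq) -h_del (qaut_lt qh).
Qed.

Lemma completion_section : dc_section dY (nbM dY) ext_act.
Proof.
split=> [h qh|//|h k qh qk|]; [|exact: ext_act_morph|exact: ext_act_cont].
split; first exact: Bijective (ext_act_invK qh) (ext_act_invKV qh).
by split=> // y y'; exact: ext_act_dist.
Qed.

End Completion.

Section UrysohnBasics.
Variables (X : Type) (d : X -> X -> qnn).
Hypotheses (ud : ultrametric d) (ext : ext_property d).

Lemma urysohn_inhabited : inhabited X.
Proof.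
have [x _] : exists z, forall a, In a nil -> val (d z a) = 1 by apply: (ext (r := fun _ => 1)).
exact: inhabits x.
Qed.

Lemma urysohn_full_dist q : 0 < val q -> exists a b, d a b = q.
Proof.
move=> q_gt0; have [x0] := urysohn_inhabited.
have [z dz] : exists z, forall a, In a [:: x0] -> val (d z a) = val q.
  apply: (ext (r := fun _ => val q)) => // a b /= [<-|//] [<-|//].
  by rewrite (ud_xx ud) !le_max lexx orbT (ltW q_gt0).
by exists z, x0; apply: qnn_inj; apply: dz; left.
Qed.

End UrysohnBasics.

Theorem theorem4p4 (X : Type) (d : X -> X -> qnn) (Y : Type) (dY : Y -> Y -> qnn)
    (e : X -> Y) :
  rational_urysohn_ultrametric d ->
  is_completion d dY e ->
  canonical_split (dcaut d) (dciso d) (@nbPW X) /\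
  canonical_split (dcaut dY) (dciso dY) (nbM dY).
Proof.
move=> [ud [[c c_inj] ext]] [udY [e_iso [e_dense complete]]].
have inhX := urysohn_inhabited ext.
have secX := coord_section ud (urysohn_coordinates ud c_inj ext inhX).
split; first exact: canonical_split_of_section (pointwise_topology d) secX.
apply: (canonical_split_of_section (metric_topology udY _)).
  exact: completion_full_dist e_iso (urysohn_full_dist ud ext).
exact: completion_section udY e_iso e_dense complete secX.
Qed.
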